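(* Let $f:[0,\infty)\to[0,\infty)$ be a convex function, let $\nu\in(0,1)$ and $t\in[0,1)\cup(1,\infty)$. Then $$\min\left\{\frac{1-\nu}{\nu},\frac{\nu}{1-\nu}\right\}\mathfrak C_{f,\frac12}(t,1)\le \mathfrak C_{f,\nu}(t,1)\le \max\left\{\frac{1-\nu}{\nu},\frac{\nu}{1-\nu}\right\}\mathfrak C_{f,\frac12}(t,1),$$ where in particular $\mathfrak C_{f,\frac12}(t,1)=\frac{1}{1-t}\int_t^1 f(\lambda)\,d\lambda$.
   Context: For real numbers $x,y$ and $\mu\in[0,1]$, write $x\nabla_\mu y:=(1-\mu)x+\mu y$. For a function $f$ Riemann integrable on the segment between $a$ and $b$, and $\nu\in[0,1]$, define $$\mathfrak C_{f,\nu}(a,b):=(1-\nu)\int_0^1 f\big(a\nabla_{\nu\lambda}b\big)\,d\lambda+\nu\int_0^1 f\big(b\nabla_{(1-\nu)\lambda}a\big)\,d\lambda .$$ *)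

From Stdlib Require Import Reals.
From Coquelicot Require Import Coquelicot.
Open Scope R_scope.

Definition wmean (mu x y : R) : R := (1 - mu) * x + mu * y.

Definition frakC (f : R -> R) (nu a b : R) : R :=
  (1 - nu) * RInt (fun lam => f (wmean (nu * lam) a b)) 0 1
  + nu * RInt (fun lam => f (wmean ((1 - nu) * lam) b a)) 0 1.

(* f : [0,oo) -> [0,oo) convex (only values on [0,oo) matter) *)
Definition convex_on_nonneg (f : R -> R) : Prop :=
  forall x y mu, 0 <= x -> 0 <= y -> 0 <= mu <= 1 ->
    f ((1 - mu) * x + mu * y) <= (1 - mu) * f x + mu * f y.

(* With m := (1 - nu) t + nu, the substitutions lam |-> t nabla_{nu lam} 1 and
   lam |-> 1 nabla_{(1-nu) lam} t map [0,1] onto the segments [t,m] and [m,1], whose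
   lengths are nu (1 - t) and (1 - nu) (1 - t).  Hence
     C_{f,nu}(t,1) = (1-nu)/nu * P + nu/(1-nu) * Q,
   with P, Q the integrals of f over [t,m] and [m,1] divided by 1 - t.  Both are
   nonnegative as f is, and P + Q = C_{f,1/2}(t,1) = (int_t^1 f) / (1 - t); a
   combination of P and Q lies between the smaller and the larger weight times P + Q.
   Convexity only serves to make f Riemann integrable: it is continuous on (0,oo)
   and has a right limit at 0. *)

From Stdlib Require Import Reals Lra Psatz Classical.
From Coquelicot Require Import Coquelicot.
Open Scope R_scope.

Definition slope (f : R -> R) (x y : R) : R := (f y - f x) / (y - x).

Lemma slope_sym f x y : slope f x y = slope f y x.
Proof. unfold slope; destruct (Req_dec x y) as [->|]; [reflexivity | field; lra]. Qed.

Lemma slope_mul f x y : x <> y -> slope f x y * (y - x) = f y - f x.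
Proof. intros; unfold slope; field; lra. Qed.

Lemma nondecreasing_right_limit (u : R -> R) (c m : R) :
  0 < c -> (forall x y, 0 < x -> x < y -> y < c -> u x <= u y) ->
  (forall x, 0 < x < c -> m <= u x) ->
  exists S, forall eps, 0 < eps ->
    exists d, 0 < d /\ forall x, 0 < x < d -> Rabs (u x - S) < eps.
Proof.
  intros Hc u_mono u_lb.
  set (E := fun r => exists x, 0 < x < c /\ r = - u x).
  assert (E_bound : bound E) by (exists (- m); intros r [x [Hx ->]]; pose proof (u_lb x Hx); lra).
  assert (E_inhabited : exists r, E r) by (exists (- u (c / 2)), (c / 2); split; [lra | auto]).
  destruct (completeness E E_bound E_inhabited) as [M [M_ub M_least]].
  exists (- M); intros eps Heps.
  assert (S_le : forall x, 0 < x < c -> - M <= u x).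
  { intros x Hx. enough (- u x <= M) by lra. apply M_ub. now exists x. }
  assert (approx : exists x0, 0 < x0 < c /\ u x0 < - M + eps).
  { apply NNPP; intros Hn.
    enough (M <= M - eps) by lra.
    apply M_least; intros r [x [Hx ->]].
    destruct (Rlt_or_le (u x) (- M + eps)) as [Hlt|]; [|lra].
    exfalso; apply Hn; now exists x. }
  destruct approx as [x0 [Hx0 Hux0]].
  exists x0; split; [lra|]; intros x Hx.
  pose proof (S_le x ltac:(lra)); pose proof (u_mono x x0 ltac:(lra) ltac:(lra) ltac:(lra)).
  rewrite Rabs_right; lra.
Qed.

Section ConvexOnNonneg.

Variable f : R -> R.
Hypothesis f_convex : convex_on_nonneg f.

Lemma convex_chord p q r : 0 <= p -> p < q < r ->
  (r - p) * f q <= (r - q) * f p + (q - p) * f r.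
Proof.
  intros Hp [Hpq Hqr].
  set (mu := (q - p) / (r - p)).
  assert (Hmu : 0 <= mu <= 1).
  { unfold mu; split.
    - apply Rdiv_le_0_compat; lra.
    - apply Rmult_le_reg_r with (r - p); [lra|].
      unfold Rdiv; rewrite Rmult_assoc, Rinv_l; lra. }
  pose proof (f_convex p r mu Hp ltac:(lra) Hmu) as H.
  replace ((1 - mu) * p + mu * r) with q in H by (unfold mu; field; lra).
  replace ((r - q) * f p + (q - p) * f r) with ((r - p) * ((1 - mu) * f p + mu * f r))
    by (unfold mu; field; lra).
  apply Rmult_le_compat_l; lra.
Qed.

Lemma convex_slope_le_left p q r : 0 <= p -> p < q < r -> slope f p q <= slope f p r.
Proof.
  intros Hp Hpqr. pose proof (convex_chord p q r Hp Hpqr).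
  unfold slope; apply Rmult_le_reg_r with ((q - p) * (r - p)); [nra|].
  replace ((f q - f p) / (q - p) * ((q - p) * (r - p))) with ((f q - f p) * (r - p))
    by (field; lra).
  replace ((f r - f p) / (r - p) * ((q - p) * (r - p))) with ((f r - f p) * (q - p))
    by (field; lra).
  nra.
Qed.

Lemma convex_slope_le_right p q r : 0 <= p -> p < q < r -> slope f p r <= slope f q r.
Proof.
  intros Hp Hpqr. pose proof (convex_chord p q r Hp Hpqr).
  unfold slope; apply Rmult_le_reg_r with ((r - p) * (r - q)); [nra|].
  replace ((f r - f p) / (r - p) * ((r - p) * (r - q))) with ((f r - f p) * (r - q))
    by (field; lra).
  replace ((f r - f q) / (r - q) * ((r - p) * (r - q))) with ((f r - f q) * (r - p))
    by (field; lra).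
  nra.
Qed.

Lemma convex_slope_between x0 h x : 0 <= x0 - h -> Rabs (x - x0) < h -> x <> x0 ->
  slope f (x0 - h) x0 <= slope f x x0 <= slope f x0 (x0 + h).
Proof.
  intros Hh Hx Hneq. apply Rabs_def2 in Hx.
  destruct (Rlt_or_le x x0) as [Hlt|Hge].
  - split.
    + apply convex_slope_le_right; lra.
    + apply Rle_trans with (slope f x (x0 + h)).
      * apply convex_slope_le_left; lra.
      * apply convex_slope_le_right; lra.
  - rewrite (slope_sym f x x0); split.
    + apply Rle_trans with (slope f (x0 - h) x).
      * apply convex_slope_le_left; lra.
      * apply convex_slope_le_right; lra.
    + apply convex_slope_le_left; lra.
Qed.

Lemma convex_continuous_pos x0 : 0 < x0 -> continuous f x0.
Proof.
  intros Hx0. apply continuity_pt_filterlim; intros eps Heps.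
  set (K := Rmax (Rabs (slope f (x0 - x0) x0)) (Rabs (slope f x0 (x0 + x0)))).
  assert (HK : 0 <= K) by (unfold K; apply Rle_trans with (2 := Rmax_l _ _), Rabs_pos).
  exists (Rmin x0 (eps / (K + 1))); split.
  { apply Rmin_pos; [lra | apply Rdiv_lt_0_compat; lra]. }
  intros x [[_ Hneq] Hx]; simpl in *; unfold R_dist in *.
  pose proof (Rmin_l x0 (eps / (K + 1))); pose proof (Rmin_r x0 (eps / (K + 1))).
  (* The slopes of chords through x0 are trapped between those over [0,x0] and [x0,2 x0]. *)
  assert (slope_bound : Rabs (slope f x x0) <= K).
  { destruct (convex_slope_between x0 x0 x ltac:(lra) ltac:(lra) ltac:(auto)).
    pose proof (proj1 (Rabs_le_between _ _) (Rmax_l _ _ : _ <= K)).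
    pose proof (proj1 (Rabs_le_between _ _) (Rmax_r _ _ : _ <= K)).
    apply Rabs_le_between; lra. }
  rewrite <- (slope_mul f x0 x), Rabs_mult, (slope_sym f x0 x) by auto.
  assert (Rabs (x - x0) * (K + 1) < eps).
  { apply Rlt_le_trans with (eps / (K + 1) * (K + 1)); [apply Rmult_lt_compat_r; lra|].
    right; field; lra. }
  pose proof (Rabs_pos (x - x0)); pose proof (Rabs_pos (slope f x x0)); nra.
Qed.

Lemma convex_right_limit_at_0 : exists L, forall eps, 0 < eps ->
  exists d, 0 < d /\ forall x, 0 < x < d -> Rabs (f x - L) < eps.
Proof.
  destruct (nondecreasing_right_limit (fun x => slope f x 1) 1 (slope f 0 1))
    as [S HS]; [lra | | |].
  { intros x y Hx Hxy Hy; apply convex_slope_le_right; lra. }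
  { intros x Hx; apply convex_slope_le_right; lra. }
  exists (f 1 - S); intros eps Heps.
  destruct (HS (eps / 2) ltac:(lra)) as [d [Hd Hclose]].
  set (d' := Rmin 1 (eps / 2 / (Rabs S + 1))).
  assert (Hd' : 0 < d') by (apply Rmin_pos; [lra | apply Rdiv_lt_0_compat; pose proof (Rabs_pos S); lra]).
  exists (Rmin d d'); split; [now apply Rmin_pos|]; intros x [Hx0 Hx].
  assert (Hxd : x < d) by (apply Rlt_le_trans with (1 := Hx), Rmin_l).
  assert (Hx1 : x < 1) by (apply Rlt_le_trans with (1 := Hx), Rle_trans with (1 := Rmin_r _ _), Rmin_l).
  assert (HxS : x < eps / 2 / (Rabs S + 1))
    by (apply Rlt_le_trans with (1 := Hx), Rle_trans with (1 := Rmin_r _ _), Rmin_r).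
  pose proof (Hclose x ltac:(lra)) as Hx_close.
  assert (f_x : f x = f 1 - slope f x 1 * (1 - x)) by (rewrite slope_mul by (intro; lra); ring).
  replace (f x - (f 1 - S)) with ((1 - x) * (S - slope f x 1) + x * S) by (rewrite f_x; ring).
  assert (Rabs (x * S) < eps / 2).
  { rewrite Rabs_mult, Rabs_right by lra.
    apply Rle_lt_trans with (eps / 2 / (Rabs S + 1) * Rabs S).
    - apply Rmult_le_compat_r; [apply Rabs_pos | lra].
    - pose proof (Rabs_pos S).
      apply Rmult_lt_reg_r with (Rabs S + 1); [lra|].
      replace (eps / 2 / (Rabs S + 1) * Rabs S * (Rabs S + 1)) with (eps / 2 * Rabs S) by (field; lra).
      nra. }
  assert (Rabs ((1 - x) * (S - slope f x 1)) < eps / 2).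
  { rewrite Rabs_mult, Rabs_right, <- Rabs_Ropp, Ropp_minus_distr by lra.
    pose proof (Rabs_pos (slope f x 1 - S)); nra. }
  pose proof (Rabs_triang ((1 - x) * (S - slope f x 1)) (x * S)); lra.
Qed.

Lemma convex_ex_RInt_le a b : 0 <= a <= b -> ex_RInt f a b.
Proof.
  intros [Ha Hab].
  destruct convex_right_limit_at_0 as [L HL].
  (* [f] may jump at [0]; integrate instead its continuous repair at [0]. *)
  set (g := fun x => if Rle_dec x 0 then L else f x).
  apply ex_RInt_ext with g.
  { intros x Hx; rewrite Rmin_left in Hx by lra; unfold g.
    destruct (Rle_dec x 0); [lra | reflexivity]. }
  apply (@ex_RInt_continuous R_CompleteNormedModule); intros z Hz.
  rewrite Rmin_left in Hz by lra.
  destruct (Req_dec z 0) as [->|Hz0].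
  - apply continuity_pt_filterlim; intros eps Heps.
    destruct (HL eps Heps) as [d [Hd Hx]].
    exists d; split; [exact Hd|]; intros x [_ Hxd]; simpl in *; unfold R_dist in *.
    unfold g; destruct (Rle_dec 0 0) as [_|]; [|lra].
    destruct (Rle_dec x 0).
    + rewrite Rminus_diag, Rabs_R0; lra.
    + apply Hx; rewrite Rminus_0_r in Hxd; apply Rabs_def2 in Hxd; lra.
  - apply continuous_ext_loc with f; [|apply convex_continuous_pos; lra].
    exists (mkposreal z ltac:(lra)); intros y Hy.
    change (Rabs (y - z) < z) in Hy; apply Rabs_def2 in Hy.
    unfold g; destruct (Rle_dec y 0); [lra | reflexivity].
Qed.

Lemma convex_ex_RInt a b : 0 <= a -> 0 <= b -> ex_RInt f a b.
Proof.
  intros Ha Hb; destruct (Rle_or_lt a b).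
  - apply convex_ex_RInt_le; lra.
  - apply ex_RInt_swap, convex_ex_RInt_le; lra.
Qed.

End ConvexOnNonneg.

Lemma RInt_affine_unit (f : R -> R) a b : a <> b -> ex_RInt f a b ->
  RInt (fun y => f ((b - a) * y + a)) 0 1 = RInt f a b / (b - a).
Proof.
  intros Hab Hex.
  assert (Hex' : ex_RInt f ((b - a) * 0 + a) ((b - a) * 1 + a))
    by (now replace ((b - a) * 0 + a) with a by ring; replace ((b - a) * 1 + a) with b by ring).
  pose proof (RInt_comp_lin f (b - a) a 0 1 Hex') as E.
  replace ((b - a) * 0 + a) with a in E by ring; replace ((b - a) * 1 + a) with b in E by ring.
  assert (scal_R : forall k y : R, scal k y = k * y) by reflexivity.
  rewrite <- E.
  transitivity (scal (/ (b - a)) (RInt (fun y => scal (b - a) (f ((b - a) * y + a))) 0 1));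
    [| rewrite scal_R; unfold Rdiv; apply Rmult_comm].
  rewrite <- RInt_scal; [| exact (ex_RInt_comp_lin f (b - a) a 0 1 Hex')].
  apply RInt_ext; intros x _.
  change (f ((b - a) * x + a) = / (b - a) * ((b - a) * f ((b - a) * x + a))).
  field; exact (Rminus_eq_contra b a (not_eq_sym Hab)).
Qed.

Lemma ex_RInt_between (f : R -> R) a b c : ex_RInt f a b -> Rmin a b <= c <= Rmax a b ->
  ex_RInt f a c /\ ex_RInt f c b.
Proof.
  intros Hex Hc.
  assert (sub : forall a b, a <= c <= b -> ex_RInt f a b -> ex_RInt f a c /\ ex_RInt f c b).
  { intros a' b' Hc' Hex'; split.
    - exact (ex_RInt_Chasles_1 (V := R_CompleteNormedModule) f a' c b' Hc' Hex').
    - exact (ex_RInt_Chasles_2 (V := R_CompleteNormedModule) f a' c b' Hc' Hex'). }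
  destruct (Rle_or_lt a b).
  - rewrite Rmin_left, Rmax_right in Hc by lra. now apply sub.
  - rewrite Rmin_right, Rmax_left in Hc by lra.
    destruct (sub b a Hc (ex_RInt_swap _ _ _ Hex)); split; now apply ex_RInt_swap.
Qed.

Lemma RInt_div_ge0 (f : R -> R) a b k : ex_RInt f a b ->
  (forall x, Rmin a b <= x <= Rmax a b -> 0 <= f x) -> 0 < (b - a) * k ->
  0 <= RInt f a b / k.
Proof.
  intros Hex Hf Hk; destruct (Rle_or_lt a b).
  - assert (0 <= RInt f a b).
    { apply RInt_ge_0; auto; intros x Hx; apply Hf.
      rewrite Rmin_left, Rmax_right; lra. }
    apply Rdiv_le_0_compat; nra.
  - assert (0 <= RInt f b a).
    { apply RInt_ge_0; [lra | now apply ex_RInt_swap |]; intros x Hx; apply Hf.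
      rewrite Rmin_right, Rmax_left; lra. }
    rewrite <- opp_RInt_swap by now apply ex_RInt_swap.
    assert (Hk' : k < 0) by nra.
    unfold opp; simpl.
    replace (- RInt f b a / k) with (RInt f b a / - k) by (field; apply Rlt_not_eq, Hk').
    apply Rdiv_le_0_compat; lra.
Qed.

Lemma frakC_split (f : R -> R) nu t : 0 < nu < 1 -> t <> 1 -> ex_RInt f t 1 ->
  frakC f nu t 1 = (1 - nu) / nu * (RInt f t (wmean nu t 1) / (1 - t))
                 + nu / (1 - nu) * (RInt f (wmean nu t 1) 1 / (1 - t)).
Proof.
  intros Hnu Ht1 Hex.
  set (m := wmean nu t 1).
  destruct (ex_RInt_between f t 1 m Hex) as [ex_tm ex_m1].
  { unfold m, wmean; destruct (Rle_or_lt t 1);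
      [rewrite Rmin_left, Rmax_right | rewrite Rmin_right, Rmax_left]; nra. }
  unfold frakC.
  rewrite (RInt_ext (fun lam => f (wmean (nu * lam) t 1)) (fun y => f ((m - t) * y + t)))
    by (intros; unfold m, wmean; f_equal; ring).
  rewrite (RInt_ext (fun lam => f (wmean ((1 - nu) * lam) 1 t)) (fun y => f ((m - 1) * y + 1)))
    by (intros; unfold m, wmean; f_equal; ring).
  assert (Hm : m - t = nu * (1 - t) /\ m - 1 = - ((1 - nu) * (1 - t))) by (unfold m, wmean; split; ring).
  rewrite (RInt_affine_unit f t m), (RInt_affine_unit f 1 m), <- (opp_RInt_swap f m 1);
    auto using ex_RInt_swap; try (intro; nra).
  unfold opp; simpl; rewrite (proj1 Hm), (proj2 Hm); field; lra.
Qed.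

Lemma frakC_half (f : R -> R) t : t <> 1 -> ex_RInt f t 1 ->
  frakC f (1/2) t 1 = / (1 - t) * RInt f t 1.
Proof.
  intros Ht1 Hex.
  destruct (ex_RInt_between f t 1 (wmean (1/2) t 1) Hex) as [ex_tm ex_m1].
  { unfold wmean; destruct (Rle_or_lt t 1);
      [rewrite Rmin_left, Rmax_right | rewrite Rmin_right, Rmax_left]; lra. }
  rewrite frakC_split, <- (RInt_Chasles f t (wmean (1/2) t 1) 1) by (auto; lra).
  unfold plus; simpl; field; lra.
Qed.

Lemma Rmin_Rmax_weighted_sum A B P Q : 0 <= P -> 0 <= Q ->
  Rmin A B * (P + Q) <= A * P + B * Q <= Rmax A B * (P + Q).
Proof.
  intros HP HQ.
  pose proof (Rmin_l A B); pose proof (Rmin_r A B).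
  pose proof (Rmax_l A B); pose proof (Rmax_r A B).
  split; nra.
Qed.

Theorem theorem2p3 (f : R -> R) (nu t : R) :
  (forall x, 0 <= x -> 0 <= f x) ->
  convex_on_nonneg f ->
  0 < nu < 1 ->
  0 <= t -> t <> 1 ->
  Rmin ((1 - nu) / nu) (nu / (1 - nu)) * frakC f (1/2) t 1 <= frakC f nu t 1 /\
  frakC f nu t 1 <= Rmax ((1 - nu) / nu) (nu / (1 - nu)) * frakC f (1/2) t 1 /\
  frakC f (1/2) t 1 = / (1 - t) * RInt f t 1.
Proof.
  intros f_ge0 f_convex Hnu Ht Ht1.
  set (m := wmean nu t 1).
  assert (Hm : 0 <= m) by (unfold m, wmean; nra).
  assert (ex_tm := convex_ex_RInt f f_convex t m Ht Hm).
  assert (ex_m1 := convex_ex_RInt f f_convex m 1 Hm ltac:(lra)).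
  assert (ex_t1 := convex_ex_RInt f f_convex t 1 Ht ltac:(lra)).
  assert (f_ge0_on : forall a b, 0 <= a -> 0 <= b ->
            forall x, Rmin a b <= x <= Rmax a b -> 0 <= f x).
  { intros a b Ha Hb x Hx; apply f_ge0, Rle_trans with (Rmin a b); [apply Rmin_glb|]; lra. }
  assert (Hd : 0 < (1 - t) * (1 - t)) by (apply Rsqr_pos_lt; intro; lra).
  pose proof (RInt_div_ge0 f t m (1 - t) ex_tm (f_ge0_on t m Ht Hm)
                ltac:(unfold m, wmean; nra)) as P_ge0.
  pose proof (RInt_div_ge0 f m 1 (1 - t) ex_m1 (f_ge0_on m 1 Hm ltac:(lra))
                ltac:(unfold m, wmean; nra)) as Q_ge0.
  rewrite (frakC_half f t Ht1 ex_t1), (frakC_split f nu t Hnu Ht1 ex_t1).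
  fold m; rewrite <- (RInt_Chasles f t m 1 ex_tm ex_m1).
  replace (/ (1 - t) * plus (RInt f t m) (RInt f m 1))
    with (RInt f t m / (1 - t) + RInt f m 1 / (1 - t)) by (unfold plus; simpl; field; lra).
  destruct (Rmin_Rmax_weighted_sum ((1 - nu) / nu) (nu / (1 - nu)) _ _ P_ge0 Q_ge0).
  repeat split; auto.
Qed.
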